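(* Consider the delay differential system \[ \begin{aligned} \dot T(t)&= s-dT(t)+aT(t)\Big(1-\frac{T(t)+I(t)}{T_{\max}}\Big)-\frac{bT(t)V(t)}{1+\alpha V(t)},\\ \dot I(t)&= \frac{bT(t-\tau)V(t-\tau)}{1+\alpha V(t-\tau)}+aI(t)\Big(1-\frac{T(t)+I(t)}{T_{\max}}\Big)-\mu I(t),\\ \dot V(t)&= pI(t)-cV(t), \end{aligned} \] with positive constants $s,d,a,T_{\max},b,\alpha,\mu,p,c$ and $\tau\ge0$. Let \[ T_0=\frac{T_{\max}}{2a}\Big(a-d+\sqrt{(a-d)^2+\tfrac{4as}{T_{\max}}}\Big),\qquad R_0=\frac{1}{\mu}\Big[\frac{bpT_0}{c}+a\Big(1-\frac{T_0}{T_{\max}}\Big)\Big]. \] If $R_0>1$, then the system has a unique equilibrium $(T_2,I_2,V_2)$ with $T_2>0$, $I_2>0$, $V_2>0$ (an infected equilibrium).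
   Context: Equilibria are constant solutions of the system (they do not depend on $\tau$). $R_0$ is called the basic reproductive number. *)

From Stdlib Require Import Reals.
Open Scope R_scope.

Record params := mkParams {
  s_ : R; d_ : R; a_ : R; Tmax_ : R; b_ : R; alpha_ : R;
  mu_ : R; p_ : R; c_ : R; tau_ : R }.

Definition params_ok (P : params) : Prop :=
  0 < s_ P /\ 0 < d_ P /\ 0 < a_ P /\ 0 < Tmax_ P /\ 0 < b_ P /\
  0 < alpha_ P /\ 0 < mu_ P /\ 0 < p_ P /\ 0 < c_ P /\ 0 <= tau_ P.

(* Right-hand sides of the DDE, as functions of the current state (T,I,V)
   and the delayed state (Td,Id,Vd) = (T(t-tau), I(t-tau), V(t-tau)). *)
Definition fT (P : params) (T I V : R) : R :=
  s_ P - d_ P * T + a_ P * T * (1 - (T + I) / Tmax_ P)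
  - b_ P * T * V / (1 + alpha_ P * V).

Definition fI (P : params) (T I V Td Vd : R) : R :=
  b_ P * Td * Vd / (1 + alpha_ P * Vd) + a_ P * I * (1 - (T + I) / Tmax_ P)
  - mu_ P * I.

Definition fV (P : params) (I V : R) : R := p_ P * I - c_ P * V.

(* An equilibrium is a constant solution: the state is constant in time,
   so the delayed state equals the current one and all derivatives vanish. *)
Definition is_equilibrium (P : params) (T I V : R) : Prop :=
  fT P T I V = 0 /\ fI P T I V T V = 0 /\ fV P I V = 0.

Definition T0 (P : params) : R :=
  Tmax_ P / (2 * a_ P) *
  (a_ P - d_ P + sqrt ((a_ P - d_ P) ^ 2 + 4 * a_ P * s_ P / Tmax_ P)).

Definition basicR0 (P : params) : R :=
  / mu_ P * (b_ P * p_ P * T0 P / c_ P + a_ P * (1 - T0 P / Tmax_ P)).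

From Stdlib Require Import Reals Lra Psatz Ranalysis5.
From Coquelicot Require Import Coquelicot.
Open Scope R_scope.

(* Dividing the T- and I-equations by T and I and substituting V = (p/c) I, the
   positive equilibria are the common positive roots (T, I) of two per-capita rates
   rateT and rateI.  For each I >= 0, rateT (., I) has a unique positive root
   Tnull I, given by the quadratic formula, and Tnull 0 = T0.  The function
   I |-> rateI (Tnull I) I is continuous, positive at I = 0 because R0 > 1, and
   negative for large I, so the intermediate value theorem gives an infected
   equilibrium.  For uniqueness: rateT is strictly decreasing in both arguments, so
   two distinct roots are ordered T1 < T2, I2 < I1.  Then rateI = 0 forces
   T1 + I1 < T2 + I2, whereas rateT - rateI = 0 reads
   b k (T + I) / (1 + alpha k I) = s / T + mu - d, whose left side would then
   increase and right side decrease. *)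

Lemma Rdiv_lt_compat (n1 n2 d1 d2 : R) :
  0 <= n1 -> n1 < n2 -> 0 < d2 -> d2 <= d1 -> n1 / d1 < n2 / d2.
Proof.
  intros hn1 hn hd2 hd. unfold Rdiv.
  apply Rle_lt_trans with (n1 * / d2).
  - apply Rmult_le_compat_l; [lra | apply Rinv_le_contravar; lra].
  - apply Rmult_lt_compat_r; [apply Rinv_0_lt_compat |]; lra.
Qed.

Definition pos_root (A B C : R) : R := (- B + sqrt (B ^ 2 + 4 * A * C)) / (2 * A).

Section PosRoot.
Variables (A B C : R).
Hypotheses (hA : 0 < A) (hC : 0 < C).

Lemma pos_root_pos : 0 < pos_root A B C.
Proof.
  unfold pos_root.
  assert (hD : 0 <= B ^ 2 + 4 * A * C) by nra.
  pose proof (sqrt_sqrt _ hD). pose proof (sqrt_pos (B ^ 2 + 4 * A * C)).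
  apply Rdiv_lt_0_compat; nra.
Qed.

Lemma pos_root_spec : A * pos_root A B C ^ 2 + B * pos_root A B C = C.
Proof.
  unfold pos_root.
  assert (hD : 0 <= B ^ 2 + 4 * A * C) by nra.
  pose proof (sqrt_sqrt _ hD) as hsq.
  set (D := sqrt _) in *.
  apply Rminus_diag_uniq.
  replace (A * ((- B + D) / (2 * A)) ^ 2 + B * ((- B + D) / (2 * A)) - C)
    with ((D * D - (B ^ 2 + 4 * A * C)) / (4 * A)) by (field; lra).
  rewrite hsq. unfold Rdiv. ring.
Qed.

Lemma pos_root_le : 0 <= B -> pos_root A B C <= 1 + C / A.
Proof.
  intros hB.
  pose proof pos_root_pos as hr. pose proof pos_root_spec as hspec.
  set (r := pos_root A B C) in *.
  assert (hAr : A * r <= A + C) by nra.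
  apply Rmult_le_reg_l with A; [lra |].
  replace (A * (1 + C / A)) with (A + C) by (field; lra). exact hAr.
Qed.
End PosRoot.

Section Equilibria.

Variable P : params.
Hypothesis HP : params_ok P.

Local Notation s := (s_ P).
Local Notation d := (d_ P).
Local Notation a := (a_ P).
Local Notation Tm := (Tmax_ P).
Local Notation b := (b_ P).
Local Notation al := (alpha_ P).
Local Notation mu := (mu_ P).

Let hs : 0 < s. Proof. apply HP. Qed.
Let hd : 0 < d. Proof. apply HP. Qed.
Let ha : 0 < a. Proof. apply HP. Qed.
Let hTm : 0 < Tm. Proof. apply HP. Qed.
Let hb : 0 < b. Proof. apply HP. Qed.
Let hal : 0 < al. Proof. apply HP. Qed.
Let hmu : 0 < mu. Proof. apply HP. Qed.

Definition VI_ratio : R := p_ P / c_ P.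
Local Notation k := VI_ratio.

Lemma VI_ratio_pos : 0 < k.
Proof. apply Rdiv_lt_0_compat; apply HP. Qed.

Let hk := VI_ratio_pos.

Let hden (y : R) : 0 <= y -> 0 < 1 + al * (k * y).
Proof.
  intros hy. pose proof hal; pose proof hk.
  assert (0 <= k * y) by (apply Rmult_le_pos; lra). nra.
Qed.

Definition infection_rate (v : R) : R := b * v / (1 + al * v).

Lemma infection_rate_le_compat (y1 y2 : R) : 0 <= y1 -> y1 <= y2 ->
  infection_rate (k * y1) <= infection_rate (k * y2).
Proof.
  intros hy1 hy12. pose proof (hden y1 hy1). pose proof (hden y2 ltac:(lra)).
  unfold infection_rate. apply Rminus_le.
  replace (b * (k * y1) / (1 + al * (k * y1)) - b * (k * y2) / (1 + al * (k * y2)))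
    with (b * k * (y1 - y2) / ((1 + al * (k * y1)) * (1 + al * (k * y2)))) by (field; lra).
  assert (0 < / ((1 + al * (k * y1)) * (1 + al * (k * y2)))) by (apply Rinv_0_lt_compat, Rmult_lt_0_compat; assumption).
  assert (0 <= b * k * (y2 - y1)) by (apply Rmult_le_pos; [apply Rmult_le_pos |]; lra).
  unfold Rdiv. nra.
Qed.

Definition rateT (x y : R) : R :=
  s / x - d + a * (1 - (x + y) / Tm) - infection_rate (k * y).
Definition rateI (x y : R) : R :=
  b * k * x / (1 + al * (k * y)) + a * (1 - (x + y) / Tm) - mu.

Lemma rateT_lt (x1 y1 x2 y2 : R) : 0 < x1 -> 0 <= y1 -> x1 <= x2 -> y1 <= y2 ->
  x1 < x2 \/ y1 < y2 -> rateT x2 y2 < rateT x1 y1.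
Proof.
  intros hx1 hy1 hx hy hlt. unfold rateT.
  pose proof (infection_rate_le_compat y1 y2 hy1 hy).
  assert (s / x2 <= s / x1).
  { unfold Rdiv. apply Rmult_le_compat_l; [lra | apply Rinv_le_contravar; lra]. }
  assert (hsum : (x1 + y1) / Tm < (x2 + y2) / Tm).
  { unfold Rdiv. apply Rmult_lt_compat_r; [apply Rinv_0_lt_compat |]; lra. }
  nra.
Qed.

Lemma rateT_sub_rateI (x y : R) : 0 < x -> 0 <= y ->
  rateT x y - rateI x y = s / x - d + mu - b * k * (x + y) / (1 + al * (k * y)).
Proof. intros hx hy. pose proof (hden y hy). unfold rateT, rateI, infection_rate. field. lra. Qed.

Lemma rate_roots_not_crossing (x1 y1 x2 y2 : R) : 0 < x1 -> 0 <= y2 -> x1 < x2 -> y2 < y1 ->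
  rateT x1 y1 = 0 -> rateI x1 y1 = 0 -> rateT x2 y2 = 0 -> rateI x2 y2 = 0 -> False.
Proof.
  intros hx1 hy2 hx hy hT1 hI1 hT2 hI2.
  assert (hden12 : 1 + al * (k * y2) <= 1 + al * (k * y1)).
  { apply Rplus_le_compat_l, Rmult_le_compat_l, Rmult_le_compat_l; lra. }
  pose proof (hden y2 hy2).
  assert (hbk : 0 < b * k) by (apply Rmult_lt_0_compat; lra).
  assert (hinc : b * k * x1 / (1 + al * (k * y1)) < b * k * x2 / (1 + al * (k * y2))).
  { apply Rdiv_lt_compat; nra. }
  assert (hsum : x1 + y1 < x2 + y2).
  { unfold rateI in hI1, hI2.
    assert (a * ((x1 + y1) / Tm) < a * ((x2 + y2) / Tm)) by nra.
    apply Rmult_lt_reg_r with (/ Tm); [apply Rinv_0_lt_compat; lra |].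
    apply Rmult_lt_reg_l with a; lra. }
  assert (b * k * (x1 + y1) / (1 + al * (k * y1)) < b * k * (x2 + y2) / (1 + al * (k * y2))).
  { apply Rdiv_lt_compat; nra. }
  assert (s / x2 < s / x1).
  { unfold Rdiv. apply Rmult_lt_compat_l; [lra | apply Rinv_lt_contravar; nra]. }
  pose proof (rateT_sub_rateI x1 y1 hx1 ltac:(lra)).
  pose proof (rateT_sub_rateI x2 y2 ltac:(lra) hy2).
  lra.
Qed.

Lemma rate_roots_unique (x1 y1 x2 y2 : R) : 0 < x1 -> 0 < y1 -> 0 < x2 -> 0 < y2 ->
  rateT x1 y1 = 0 -> rateI x1 y1 = 0 -> rateT x2 y2 = 0 -> rateI x2 y2 = 0 ->
  x1 = x2 /\ y1 = y2.
Proof.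
  revert x1 y1 x2 y2.
  assert (wlog : forall x1 y1 x2 y2, 0 < x1 -> 0 < y1 -> 0 < x2 -> 0 < y2 -> x1 <= x2 ->
    rateT x1 y1 = 0 -> rateI x1 y1 = 0 -> rateT x2 y2 = 0 -> rateI x2 y2 = 0 ->
    x1 = x2 /\ y1 = y2).
  { intros x1 y1 x2 y2 hx1 hy1 hx2 hy2 hx hT1 hI1 hT2 hI2.
    destruct (Rle_lt_dec y1 y2) as [hy | hy].
    - destruct (Req_dec x1 x2), (Req_dec y1 y2); try tauto;
        exfalso; pose proof (rateT_lt x1 y1 x2 y2); lra.
    - exfalso. destruct (Req_dec x1 x2) as [<- | hneq].
      + pose proof (rateT_lt x1 y2 x1 y1); lra.
      + apply (rate_roots_not_crossing x1 y1 x2 y2); lra. }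
  intros x1 y1 x2 y2 hx1 hy1 hx2 hy2 hT1 hI1 hT2 hI2.
  destruct (Rle_lt_dec x1 x2).
  - apply wlog; assumption.
  - destruct (wlog x2 y2 x1 y1); lra.
Qed.

(* [x * rateT x y = 0] is the quadratic [(a/Tm) x^2 + B x = s], B the middle argument below. *)
Definition Tnull (y : R) : R :=
  pos_root (a / Tm) (d - a + a * y / Tm + infection_rate (k * y)) s.

Let hA : 0 < a / Tm := Rdiv_lt_0_compat _ _ ha hTm.

Lemma Tnull_pos (y : R) : 0 < Tnull y.
Proof. apply pos_root_pos; assumption. Qed.

Lemma rateT_Tnull (y : R) : 0 <= y -> rateT (Tnull y) y = 0.
Proof.
  intros hy. pose proof (Tnull_pos y) as hX.
  pose proof (pos_root_spec (a / Tm) (d - a + a * y / Tm + infection_rate (k * y)) s hA hs) as hspec.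
  fold (Tnull y) in hspec. unfold rateT.
  set (X := Tnull y) in *.
  replace (s / X - d + a * (1 - (X + y) / Tm) - infection_rate (k * y))
    with ((s - (a / Tm * X ^ 2 + (d - a + a * y / Tm + infection_rate (k * y)) * X)) / X) by (field; lra).
  rewrite hspec. unfold Rdiv. ring.
Qed.

Lemma Tnull_0 : Tnull 0 = T0 P.
Proof.
  unfold Tnull, pos_root, T0, infection_rate.
  replace (d - a + a * 0 / Tm + b * (k * 0) / (1 + al * (k * 0))) with (d - a) by (field; lra).
  replace ((d - a) ^ 2 + 4 * (a / Tm) * s) with ((a - d) ^ 2 + 4 * a * s / Tm) by (field; lra).
  field. lra.
Qed.

Lemma Tnull_le (y : R) : Tm <= y -> Tnull y <= 1 + s / (a / Tm).
Proof.
  intros hy. apply pos_root_le; try assumption.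
  pose proof (infection_rate_le_compat 0 y (Rle_refl 0) ltac:(lra)).
  assert (infection_rate (k * 0) = 0) by (unfold infection_rate; field; lra).
  assert (a <= a * y / Tm).
  { apply Rmult_le_reg_r with Tm; [lra |].
    replace (a * y / Tm * Tm) with (a * y) by (field; lra). nra. }
  lra.
Qed.

Lemma rateI_Tnull_eventually_neg : exists y, 0 < y /\ rateI (Tnull y) y < 0.
Proof.
  set (M := 1 + s / (a / Tm)).
  assert (hM : 0 < M) by (unfold M; pose proof (Rdiv_lt_0_compat _ _ hs hA); lra).
  assert (hbk : 0 < b * k) by (apply Rmult_lt_0_compat; lra).
  set (y := Tm * (2 + b * k * M / a)).
  assert (hy : Tm <= y).
  { unfold y. assert (0 <= b * k * M / a) by (apply Rdiv_le_0_compat; nra).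
    nra. }
  exists y. split; [lra |].
  pose proof (Tnull_le y hy) as hXM. pose proof (Tnull_pos y) as hX.
  fold M in hXM. unfold rateI. set (X := Tnull y) in *.
  assert (b * k * X / (1 + al * (k * y)) <= b * k * X).
  { pose proof (hden y ltac:(lra)).
    apply Rmult_le_reg_r with (1 + al * (k * y)); [lra |].
    replace (b * k * X / (1 + al * (k * y)) * (1 + al * (k * y))) with (b * k * X) by (field; lra).
    assert (0 <= al * (k * y)) by (apply Rmult_le_pos; [| apply Rmult_le_pos]; lra).
    assert (0 <= b * k * X) by nra.
    nra. }
  assert (a * (1 - (X + y) / Tm) = a - a * X / Tm - (2 * a + b * k * M)) by (unfold y; field; lra).
  assert (0 <= a * X / Tm) by (apply Rdiv_le_0_compat; nra).
  nra.
Qed.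

Lemma rateI_Tnull_continuous (y : R) : 0 <= y -> continuity_pt (fun y => rateI (Tnull y) y) y.
Proof.
  intros hy. apply continuity_pt_filterlim, (ex_derive_continuous (fun y => rateI (Tnull y) y)).
  pose proof (hden y hy).
  assert (0 < (d - a + a * y / Tm + infection_rate (k * y)) ^ 2 + 4 * (a / Tm) * s).
  { pose proof (Rmult_lt_0_compat _ _ hA hs). pose proof (pow2_ge_0 (d - a + a * y / Tm + infection_rate (k * y))). lra. }
  unfold rateI, Tnull, pos_root, infection_rate in *. auto_derive. repeat split; lra.
Qed.

Lemma rateI_T0_pos : basicR0 P > 1 -> 0 < rateI (T0 P) 0.
Proof.
  unfold basicR0, rateI, VI_ratio. intros hR0.
  assert (hc : 0 < c_ P) by apply HP.
  apply Rmult_gt_compat_l with (r := mu) in hR0; [| lra].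
  rewrite <- Rmult_assoc, Rinv_r, Rmult_1_l, Rmult_1_r in hR0 by lra.
  replace (b * (p_ P / c_ P) * T0 P / (1 + al * (p_ P / c_ P * 0)))
    with (b * p_ P * T0 P / c_ P) by (field; lra).
  lra.
Qed.

Lemma exists_rate_root : basicR0 P > 1 ->
  exists y, 0 < y /\ rateT (Tnull y) y = 0 /\ rateI (Tnull y) y = 0.
Proof.
  intros hR0.
  destruct rateI_Tnull_eventually_neg as [y1 [hy1 hneg]].
  pose proof (rateI_T0_pos hR0) as hpos. rewrite <- Tnull_0 in hpos.
  destruct (IVT_interv (fun y => - rateI (Tnull y) y) 0 y1) as [y [hy hroot]].
  - intros y hy. apply continuity_pt_opp, rateI_Tnull_continuous. lra.
  - exact hy1.
  - lra.
  - lra.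
  - assert (y <> 0) by (intros ->; lra).
    exists y. repeat split; [lra | apply rateT_Tnull; lra | lra].
Qed.

Lemma is_equilibrium_iff (x y v : R) : 0 < x -> 0 < y ->
  is_equilibrium P x y v <-> v = k * y /\ rateT x y = 0 /\ rateI x y = 0.
Proof.
  intros hx hy.
  assert (hc : 0 < c_ P) by apply HP.
  pose proof (hden y ltac:(lra)).
  assert (hV : fV P y v = 0 <-> v = k * y).
  { unfold fV, VI_ratio. split; intros h.
    - apply Rmult_eq_reg_l with (c_ P); [| lra].
      replace (c_ P * (p_ P / c_ P * y)) with (p_ P * y) by (field; lra). lra.
    - subst v. field. lra. }
  assert (hfT : fT P x y (k * y) = x * rateT x y) by (unfold fT, rateT, infection_rate; field; lra).
  assert (hfI : fI P x y (k * y) x (k * y) = y * rateI x y) by (unfold fI, rateI; field; lra).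
  unfold is_equilibrium. split.
  - intros (hT & hI & hv). apply hV in hv. subst v.
    split; [reflexivity |]. rewrite hfT in hT. rewrite hfI in hI. split; nra.
  - intros (-> & hT & hI). rewrite hfT, hfI, hT, hI, hV. repeat split; ring.
Qed.

End Equilibria.

Theorem mainTheorem2 (P : params) :
  params_ok P -> basicR0 P > 1 ->
  exists T2 I2 V2 : R,
    (0 < T2 /\ 0 < I2 /\ 0 < V2 /\ is_equilibrium P T2 I2 V2) /\
    (forall T I V : R, 0 < T -> 0 < I -> 0 < V -> is_equilibrium P T I V ->
       T = T2 /\ I = I2 /\ V = V2).
Proof.
  intros HP hR0.
  destruct (exists_rate_root P HP hR0) as (I2 & hI2 & hrT & hrI).
  pose proof (Tnull_pos P HP I2) as hT2.
  exists (Tnull P I2), I2, (VI_ratio P * I2). split.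
  - assert (0 < VI_ratio P * I2).
    { apply Rmult_lt_0_compat; [apply VI_ratio_pos |]; assumption. }
    do 3 (split; [assumption |]).
    apply (is_equilibrium_iff P HP); auto.
  - intros T I V hT hI _ hEq.
    apply (is_equilibrium_iff P HP) in hEq as (-> & hrT' & hrI'); auto.
    destruct (rate_roots_unique P HP T I (Tnull P I2) I2) as [-> ->]; auto.
Qed.
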